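(* Let $\Omega\subset\mathbb{C}^2$ be a domain, let $h$ be a holomorphic function on $\Omega$, let $\rho(z):=|h(z)|^2-1$ with $d\rho\neq 0$ on $M:=\{z\in\Omega:\rho(z)=0\}$, and let $K$ be a $C^2$-smooth totally real disc contained in $M$. Then $h$ is constant along each leaf of the characteristic foliation of $K$.
   Context: A $C^2$-smooth totally real disc is a compact subset of a $C^2$-smooth submanifold $N$ of $\mathbb{C}^2$ with $T_pN\cap iT_pN=\{0\}$ for all $p\in N$, which is $C^2$-diffeomorphic to the closed unit disc in the plane. For $p\in M$, $T^{\mathbb{C}}_pM:=T_pM\cap iT_pM$. The characteristic foliation of $K$ is the foliation whose leaves are the curves $\gamma$ in $K$ with $\gamma'(t)\in T_{\gamma(t)}K\cap T^{\mathbb{C}}_{\gamma(t)}M$ for all $t$. *)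

From Stdlib Require Import Reals.
From Coquelicot Require Import Coquelicot.
Open Scope R_scope.

Definition C2 : Type := (C * C)%type.

Definition c2add (u v : C2) : C2 := (Cplus (fst u) (fst v), Cplus (snd u) (snd v)).
Definition c2sub (u v : C2) : C2 := (Cminus (fst u) (fst v), Cminus (snd u) (snd v)).
Definition c2scal (r : R) (u : C2) : C2 := (Cmult (RtoC r) (fst u), Cmult (RtoC r) (snd u)).
Definition c2i (u : C2) : C2 := (Cmult Ci (fst u), Cmult Ci (snd u)).
Definition c2zero : C2 := (RtoC 0, RtoC 0).
Definition c2norm (u : C2) : R := sqrt (Cmod (fst u) ^ 2 + Cmod (snd u) ^ 2).

Definition c2open (U : C2 -> Prop) : Prop :=
  forall z, U z -> exists eps, 0 < eps /\ forall w, c2norm (c2sub w z) < eps -> U w.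

Definition c2connected (U : C2 -> Prop) : Prop :=
  forall A B : C2 -> Prop, c2open A -> c2open B ->
    (forall z, U z -> A z \/ B z) ->
    (forall z, U z -> A z -> B z -> False) ->
    (exists z, U z /\ A z) -> (exists z, U z /\ B z) -> False.

Definition c2domain (U : C2 -> Prop) : Prop :=
  c2open U /\ c2connected U /\ exists z, U z.

Definition holomorphic_on (U : C2 -> Prop) (h : C2 -> C) : Prop :=
  forall z, U z -> exists a1 a2 : C,
    forall eps, 0 < eps -> exists delta, 0 < delta /\
      forall w, c2norm w < delta ->
        Cmod (Cminus (Cminus (h (c2add z w)) (h z))
                     (Cplus (Cmult a1 (fst w)) (Cmult a2 (snd w))))
        <= eps * c2norm w.

Definition is_rdiff (f : C2 -> R) (z : C2) (L : C2 -> R) : Prop :=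
  (forall u v, L (c2add u v) = L u + L v) /\
  (forall r u, L (c2scal r u) = r * L u) /\
  (forall eps, 0 < eps -> exists delta, 0 < delta /\
     forall w, c2norm w < delta ->
       Rabs (f (c2add z w) - f z - L w) <= eps * c2norm w).

(** Tangent space at p of the real hypersurface {rho = 0} (with d rho <> 0):
    the kernel of d rho(p). *)
Definition TM (rho : C2 -> R) (p v : C2) : Prop :=
  forall L, is_rdiff rho p L -> L v = 0.

(** Complex tangent space T^C_p M = T_p M ∩ i T_p M. *)
Definition TCM (rho : C2 -> R) (p v : C2) : Prop :=
  TM rho p v /\ TM rho p (c2i v).

Definition r2open (U : R * R -> Prop) : Prop :=
  forall p, U p -> exists eps, 0 < eps /\
    forall q, Rabs (fst q - fst p) < eps -> Rabs (snd q - snd p) < eps -> U q.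

Definition cdisc (p : R * R) : Prop := fst p ^ 2 + snd p ^ 2 <= 1.

Definition r2cont_at (g : R * R -> R) (p : R * R) : Prop :=
  forall eps, 0 < eps -> exists delta, 0 < delta /\
    forall q, Rabs (fst q - fst p) < delta -> Rabs (snd q - snd p) < delta ->
      Rabs (g q - g p) < eps.

Fixpoint Ck (k : nat) (U : R * R -> Prop) (g : R * R -> R) : Prop :=
  match k with
  | O => forall p, U p -> r2cont_at g p
  | S k' => (forall p, U p -> r2cont_at g p) /\
      exists g1 g2 : R * R -> R,
        (forall p, U p ->
           is_derive (fun t => g (t, snd p)) (fst p) (g1 p) /\
           is_derive (fun t => g (fst p, t)) (snd p) (g2 p)) /\
        Ck k' U g1 /\ Ck k' U g2
  end.

Definition comp1 (u : C2) : R := fst (fst u).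
Definition comp2 (u : C2) : R := snd (fst u).
Definition comp3 (u : C2) : R := fst (snd u).
Definition comp4 (u : C2) : R := snd (snd u).

Definition C2map_Ck (k : nat) (U : R * R -> Prop) (phi : R * R -> C2) : Prop :=
  Ck k U (fun p => comp1 (phi p)) /\ Ck k U (fun p => comp2 (phi p)) /\
  Ck k U (fun p => comp3 (phi p)) /\ Ck k U (fun p => comp4 (phi p)).

Definition pd1 (phi : R * R -> C2) (p : R * R) : C2 :=
  ((Derive (fun t => comp1 (phi (t, snd p))) (fst p),
    Derive (fun t => comp2 (phi (t, snd p))) (fst p)),
   (Derive (fun t => comp3 (phi (t, snd p))) (fst p),
    Derive (fun t => comp4 (phi (t, snd p))) (fst p))).
Definition pd2 (phi : R * R -> C2) (p : R * R) : C2 :=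
  ((Derive (fun t => comp1 (phi (fst p, t))) (snd p),
    Derive (fun t => comp2 (phi (fst p, t))) (snd p)),
   (Derive (fun t => comp3 (phi (fst p, t))) (snd p),
    Derive (fun t => comp4 (phi (fst p, t))) (snd p))).

Definition TK (phi : R * R -> C2) (q v : C2) : Prop :=
  exists p, cdisc p /\ phi p = q /\
    exists a b : R, v = c2add (c2scal a (pd1 phi p)) (c2scal b (pd2 phi p)).

(** phi parametrizes a C^2-smooth totally real disc K = phi(closed unit disc):
    phi is C^2 on an open neighbourhood of the closed disc, injective on the
    closed disc, an immersion there, and its tangent planes are totally real
    (T_q K ∩ i T_q K = {0}). *)
Definition totally_real_disc_param (phi : R * R -> C2) : Prop :=
  (exists U, r2open U /\ (forall p, cdisc p -> U p) /\ C2map_Ck 2 U phi) /\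
  (forall p q, cdisc p -> cdisc q -> phi p = phi q -> p = q) /\
  (forall p a b, cdisc p ->
     c2add (c2scal a (pd1 phi p)) (c2scal b (pd2 phi p)) = c2zero -> a = 0 /\ b = 0) /\
  (forall q v, TK phi q v -> (exists w, TK phi q w /\ v = c2i w) -> v = c2zero).

Definition is_derive_C2 (gamma : R -> C2) (t : R) (v : C2) : Prop :=
  is_derive (fun s => comp1 (gamma s)) t (comp1 v) /\
  is_derive (fun s => comp2 (gamma s)) t (comp2 v) /\
  is_derive (fun s => comp3 (gamma s)) t (comp3 v) /\
  is_derive (fun s => comp4 (gamma s)) t (comp4 v).

(* Write dh(z) w = a1 w1 + a2 w2 for the complex differential of h.  The real
   differential of rho = |h|^2 - 1 at z is w |-> 2 Re (conj (h z) * dh(z) w).  A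
   vector v of T^C M lies in the kernel of d rho together with i v, so both the real
   and the imaginary part of conj (h z) * dh(z) v vanish; as |h z| = 1 this forces
   dh(z) v = 0.  Along a leaf gamma we have gamma' in T^C M, hence by the chain rule
   (h o gamma)' = dh(gamma) gamma' = 0 and h o gamma is constant. *)

From Stdlib Require Import Reals Lra Psatz.
From Coquelicot Require Import Coquelicot.
Open Scope R_scope.

Lemma Cmod_pair_le (x y x' y' : R) :
  0 <= x <= x' -> 0 <= y <= y' -> Cmod (x, y) <= Cmod (x', y').
Proof. intros Hx Hy. unfold Cmod; cbn [fst snd]. apply sqrt_le_1_alt. nra. Qed.

Lemma Cmod_le_Rabs_add (c : C) : Cmod c <= Rabs (Re c) + Rabs (Im c).
Proof.
  destruct c as [x y]. unfold Cmod, Re, Im; cbn [fst snd].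
  rewrite <- (pow2_abs x), <- (pow2_abs y).
  pose proof (Rabs_pos x). pose proof (Rabs_pos y).
  rewrite <- (sqrt_pow2 (Rabs x + Rabs y)) by lra.
  apply sqrt_le_1_alt. nra.
Qed.

Lemma im_le_Cmod (c : C) : Rabs (Im c) <= Cmod c.
Proof. eapply Rle_trans; [apply Rmax_r|apply Rmax_Cmod]. Qed.

Lemma c2norm_Cmod (u : C2) : c2norm u = Cmod (Cmod (fst u), Cmod (snd u)).
Proof. reflexivity. Qed.

Lemma c2norm_ge_0 (u : C2) : 0 <= c2norm u.
Proof. apply sqrt_pos. Qed.

Lemma Cmod_fst_le_c2norm (u : C2) : Cmod (fst u) <= c2norm u.
Proof.
  rewrite c2norm_Cmod, <- (Rabs_pos_eq (Cmod (fst u))) at 1 by apply Cmod_ge_0.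
  apply (re_le_Cmod (Cmod (fst u), Cmod (snd u))).
Qed.

Lemma Cmod_snd_le_c2norm (u : C2) : Cmod (snd u) <= c2norm u.
Proof.
  rewrite c2norm_Cmod, <- (Rabs_pos_eq (Cmod (snd u))) at 1 by apply Cmod_ge_0.
  apply (im_le_Cmod (Cmod (fst u), Cmod (snd u))).
Qed.

Lemma c2norm_triangle (u v : C2) : c2norm (c2add u v) <= c2norm u + c2norm v.
Proof.
  rewrite !c2norm_Cmod. eapply Rle_trans; [|apply Cmod_triangle].
  apply Cmod_pair_le; split; try apply Cmod_ge_0; apply Cmod_triangle.
Qed.

Lemma c2norm_scal (r : R) (u : C2) : c2norm (c2scal r u) = Rabs r * c2norm u.
Proof.
  rewrite !c2norm_Cmod; simpl. rewrite !Cmod_mult, !Cmod_R.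
  replace (Rabs r * Cmod (fst u), Rabs r * Cmod (snd u))
    with (RtoC (Rabs r) * (Cmod (fst u), Cmod (snd u)))%C
    by (unfold RtoC, Cmult; simpl; f_equal; ring).
  rewrite Cmod_mult, Cmod_R, Rabs_Rabsolu. reflexivity.
Qed.

Lemma c2norm_le_Rabs_comp (u : C2) :
  c2norm u <= Rabs (comp1 u) + Rabs (comp2 u) + Rabs (comp3 u) + Rabs (comp4 u).
Proof.
  rewrite c2norm_Cmod. eapply Rle_trans; [apply Cmod_le_Rabs_add|]; simpl.
  rewrite !Rabs_pos_eq by apply Cmod_ge_0.
  pose proof (Cmod_le_Rabs_add (fst u)). pose proof (Cmod_le_Rabs_add (snd u)).
  unfold comp1, comp2, comp3, comp4, Re, Im in *. lra.
Qed.

Lemma c2add_sub (z x : C2) : c2add z (c2sub x z) = x.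
Proof.
  destruct z as [z1 z2], x as [x1 x2]. unfold c2add, c2sub; simpl. f_equal; ring.
Qed.

Lemma comp_c2sub_c2scal (x z v : C2) (r : R) :
  let u := c2sub (c2sub x z) (c2scal r v) in
  comp1 u = comp1 x - comp1 z - r * comp1 v /\ comp2 u = comp2 x - comp2 z - r * comp2 v /\
  comp3 u = comp3 x - comp3 z - r * comp3 v /\ comp4 u = comp4 x - comp4 z - r * comp4 v.
Proof.
  destruct x as [[? ?] [? ?]], z as [[? ?] [? ?]], v as [[? ?] [? ?]].
  unfold comp1, comp2, comp3, comp4, c2sub, c2scal, Cminus, Cplus, Copp, Cmult, RtoC; simpl.
  repeat split; ring.
Qed.

Lemma c2norm_sub_le (x z v : C2) (s e : R) :
  c2norm (c2sub (c2sub x z) (c2scal s v)) <= e * Rabs s ->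
  c2norm (c2sub x z) <= (c2norm v + e) * Rabs s.
Proof.
  intros Hr. rewrite <- (c2add_sub (c2scal s v) (c2sub x z)).
  eapply Rle_trans; [apply c2norm_triangle|]. rewrite c2norm_scal. lra.
Qed.

Lemma is_derive_estimate (f : R -> R) (t l : R) :
  is_derive f t l -> forall eps : posreal,
  locally t (fun y => Rabs (f y - f t - (y - t) * l) <= eps * Rabs (y - t)).
Proof. intros [_ Hd] eps. exact (Hd t (fun P HP => HP) eps). Qed.

Lemma is_derive_of_estimate (f : R -> R) (t l : R) :
  (forall eps : posreal,
    locally t (fun y => Rabs (f y - f t - (y - t) * l) <= eps * Rabs (y - t))) ->
  is_derive f t l.
Proof.
  intros H. split; [apply is_linear_scal_l|].
  intros x Hx. apply (@is_filter_lim_locally_unique _ R_NormedModule) in Hx. subst x. exact H.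
Qed.

Lemma is_derive_Re_Im (f : R -> C) (t : R) (l : C) :
  (forall eps : posreal,
    locally t (fun y => Cmod (f y - f t - RtoC (y - t) * l)%C <= eps * Rabs (y - t))) ->
  is_derive (fun y => Re (f y)) t (Re l) /\ is_derive (fun y => Im (f y)) t (Im l).
Proof.
  intros H. split; apply is_derive_of_estimate; intros eps;
    generalize (H eps); apply filter_imp; intros y Hy; refine (Rle_trans _ _ _ _ Hy).
  - replace (Re (f y) - Re (f t) - (y - t) * Re l) with (Re (f y - f t - RtoC (y - t) * l)%C)
      by (unfold Re, Im, Cminus, Cplus, Copp, Cmult, RtoC; simpl; ring).
    apply re_le_Cmod.
  - replace (Im (f y) - Im (f t) - (y - t) * Im l) with (Im (f y - f t - RtoC (y - t) * l)%C)
      by (unfold Re, Im, Cminus, Cplus, Copp, Cmult, RtoC; simpl; ring).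
    apply im_le_Cmod.
Qed.

Lemma is_derive_zero_const (f : R -> R) (a b : R) :
  (forall x, a < x < b -> is_derive f x 0) ->
  forall s t, a < s < b -> a < t < b -> f s = f t.
Proof.
  intros Hd s t Hs Ht.
  destruct (MVT_abs f (fun _ => 0) s t) as [c [Hc _]].
  - intros c Hc. apply is_derive_Reals, Hd.
    pose proof (Rmin_glb_lt s t a). pose proof (Rmax_lub_lt s t b). lra.
  - rewrite Rabs_R0, Rmult_0_l in Hc. apply Rabs_eq_0 in Hc. lra.
Qed.

Definition clin (a1 a2 : C) (w : C2) : C := (a1 * fst w + a2 * snd w)%C.

Lemma clin_add (a1 a2 : C) (u v : C2) :
  clin a1 a2 (c2add u v) = (clin a1 a2 u + clin a1 a2 v)%C.
Proof. unfold clin, c2add; simpl. ring. Qed.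

Lemma clin_scal (a1 a2 : C) (r : R) (u : C2) :
  clin a1 a2 (c2scal r u) = (RtoC r * clin a1 a2 u)%C.
Proof. unfold clin, c2scal; simpl. ring. Qed.

Lemma clin_sub (a1 a2 : C) (u v : C2) :
  clin a1 a2 (c2sub u v) = (clin a1 a2 u - clin a1 a2 v)%C.
Proof. unfold clin, c2sub; simpl. ring. Qed.

Lemma clin_i (a1 a2 : C) (u : C2) : clin a1 a2 (c2i u) = (Ci * clin a1 a2 u)%C.
Proof. unfold clin, c2i; simpl. ring. Qed.

Lemma Cmod_clin_le (a1 a2 : C) (w : C2) :
  Cmod (clin a1 a2 w) <= (Cmod a1 + Cmod a2) * c2norm w.
Proof.
  unfold clin. eapply Rle_trans; [apply Cmod_triangle|]. rewrite !Cmod_mult.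
  pose proof (Cmod_fst_le_c2norm w). pose proof (Cmod_snd_le_c2norm w).
  pose proof (Cmod_ge_0 a1). pose proof (Cmod_ge_0 a2).
  pose proof (Cmod_ge_0 (fst w)). pose proof (Cmod_ge_0 (snd w)). nra.
Qed.

(* This is the body of [holomorphic_on]: [Hh z Hz] is an [is_cdiff] by conversion. *)
Definition is_cdiff (h : C2 -> C) (z : C2) (a1 a2 : C) : Prop :=
  forall eps, 0 < eps -> exists delta, 0 < delta /\
    forall w, c2norm w < delta ->
      Cmod (h (c2add z w) - h z - clin a1 a2 w)%C <= eps * c2norm w.

Lemma small_quadratic_remainder (P M eps : R) :
  0 <= P -> 0 <= M -> 0 < eps ->
  exists k delta, 0 < k /\ 0 < delta /\
    forall n d e, 0 <= n < delta -> 0 <= d <= M * n -> 0 <= e <= k * n ->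
      2 * P * e + (d + e) ^ 2 <= eps * n.
Proof.
  intros HP HM Heps.
  set (k := Rmin 1 (eps / (4 * (P + 1)))).
  set (delta := eps / (2 * (M + 1) ^ 2)).
  assert (Hk : 0 < k) by (apply Rmin_glb_lt; [lra | apply Rdiv_lt_0_compat; lra]).
  assert (Hk1 : k <= 1) by apply Rmin_l.
  assert (HkP : k * (4 * (P + 1)) <= eps) by (apply Rle_div_r; [lra | apply Rmin_r]).
  assert (HM1 : 0 < (M + 1) ^ 2) by nra.
  assert (Hdelta : (M + 1) ^ 2 * delta = eps / 2) by (unfold delta; field; lra).
  exists k, delta. split; [exact Hk|]. split; [unfold delta; apply Rdiv_lt_0_compat; lra|].
  intros n d e Hn Hd He.
  assert (Hde1 : d + e <= (M + 1) * n) by nra.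
  assert (Hde : (d + e) ^ 2 <= (M + 1) ^ 2 * n * n) by nra.
  assert (Hn1 : (M + 1) ^ 2 * n <= eps / 2) by nra.
  assert (Hn2 : (M + 1) ^ 2 * n * n <= eps / 2 * n) by nra.
  assert (HPe : 2 * P * e <= eps / 2 * n) by nra.
  lra.
Qed.

Lemma Cmod2_add_expand (p d e : C) :
  Cmod (p + (d + e))%C ^ 2 - Cmod p ^ 2 - 2 * Re (Cconj p * d)%C
  = 2 * Re (Cconj p * e)%C + Cmod (d + e)%C ^ 2.
Proof.
  rewrite !Cmod2_alt. destruct p, d, e. unfold Re, Im, Cconj, Cmult, Cplus; simpl. ring.
Qed.

Lemma is_rdiff_Cmod2_sub1 (h : C2 -> C) (z : C2) (a1 a2 : C) :
  is_cdiff h z a1 a2 ->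
  is_rdiff (fun w => Cmod (h w) ^ 2 - 1) z
    (fun w => 2 * Re (Cconj (h z) * clin a1 a2 w)%C).
Proof.
  intros Hh. split; [|split].
  - intros u v. rewrite clin_add, Cmult_plus_distr_l, re_plus. ring.
  - intros r u. rewrite clin_scal.
    replace (Cconj (h z) * (RtoC r * clin a1 a2 u))%C
      with (RtoC r * (Cconj (h z) * clin a1 a2 u))%C by ring.
    rewrite re_scal_l. ring.
  - intros eps Heps.
    assert (HM : 0 <= Cmod a1 + Cmod a2)
      by (pose proof (Cmod_ge_0 a1); pose proof (Cmod_ge_0 a2); lra).
    destruct (small_quadratic_remainder (Cmod (h z)) _ eps (Cmod_ge_0 _) HM Heps)
      as (k & delta & Hk & Hdelta & Hbound).
    destruct (Hh k Hk) as [d [Hd Hw]].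
    exists (Rmin d delta). split; [apply Rmin_glb_lt; lra|].
    intros w Hwd.
    pose proof (Rmin_l d delta). pose proof (Rmin_r d delta).
    set (D := clin a1 a2 w) in *. set (E := (h (c2add z w) - h z - D)%C) in *.
    replace (Cmod (h (c2add z w)) ^ 2 - 1 - (Cmod (h z) ^ 2 - 1) - 2 * Re (Cconj (h z) * D))
      with (2 * Re (Cconj (h z) * E)%C + Cmod (D + E)%C ^ 2)
      by (rewrite <- Cmod2_add_expand;
          replace (h z + (D + E))%C with (h (c2add z w)) by (unfold E; ring); ring).
    eapply Rle_trans; [apply Rabs_triang|].
    rewrite Rabs_mult, (Rabs_pos_eq 2), (Rabs_pos_eq (Cmod _ ^ 2)) by (try apply pow2_ge_0; lra).
    apply Rle_trans with (2 * Cmod (h z) * Cmod E + (Cmod D + Cmod E) ^ 2).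
    + pose proof (re_le_Cmod (Cconj (h z) * E)%C) as Hre.
      rewrite Cmod_mult, Cmod_conj in Hre.
      pose proof (Cmod_triangle D E). pose proof (Cmod_ge_0 (D + E)%C). nra.
    + apply Hbound.
      * split; [apply c2norm_ge_0 | lra].
      * split; [apply Cmod_ge_0 | apply Cmod_clin_le].
      * split; [apply Cmod_ge_0 | apply Hw; lra].
Qed.

Lemma clin_TCM_eq0 (h : C2 -> C) (z v : C2) (a1 a2 : C) :
  is_cdiff h z a1 a2 -> Cmod (h z) ^ 2 - 1 = 0 ->
  TCM (fun w => Cmod (h w) ^ 2 - 1) z v -> clin a1 a2 v = 0%C.
Proof.
  intros Hh Hunit [Hv Hiv].
  pose proof (is_rdiff_Cmod2_sub1 _ _ _ _ Hh) as HL.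
  specialize (Hv _ HL). specialize (Hiv _ HL). cbv beta in Hv, Hiv.
  rewrite clin_i in Hiv.
  set (X := (Cconj (h z) * clin a1 a2 v)%C) in *.
  replace (Cconj (h z) * (Ci * clin a1 a2 v))%C with (X * Ci)%C in Hiv
    by (unfold X; ring).
  rewrite re_mult_Ci in Hiv.
  assert (HX : X = 0%C)
    by (destruct X as [x y]; unfold Re, Im, RtoC in *; simpl in *; f_equal; lra).
  assert (Hmod : Cmod (h z) = 1) by (pose proof (Cmod_ge_0 (h z)); nra).
  apply Cmod_eq_0.
  rewrite <- (Rmult_1_l (Cmod _)), <- Hmod, <- Cmod_conj, <- Cmod_mult.
  fold X. rewrite HX. apply Cmod_0.
Qed.

Lemma is_derive_C2_estimate (gamma : R -> C2) (t : R) (v : C2) :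
  is_derive_C2 gamma t v -> forall eps : posreal,
  locally t (fun y =>
    c2norm (c2sub (c2sub (gamma y) (gamma t)) (c2scal (y - t) v)) <= eps * Rabs (y - t)).
Proof.
  intros (H1 & H2 & H3 & H4) eps.
  assert (He : 0 < eps / 4) by (destruct eps; simpl; lra).
  set (e := mkposreal _ He).
  generalize (filter_and _ _ (is_derive_estimate _ _ _ H1 e)
             (filter_and _ _ (is_derive_estimate _ _ _ H2 e)
             (filter_and _ _ (is_derive_estimate _ _ _ H3 e)
                             (is_derive_estimate _ _ _ H4 e)))).
  apply filter_imp. intros y (E1 & E2 & E3 & E4). simpl in E1, E2, E3, E4.
  eapply Rle_trans; [apply c2norm_le_Rabs_comp|].
  destruct (comp_c2sub_c2scal (gamma y) (gamma t) v (y - t)) as (-> & -> & -> & ->).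
  lra.
Qed.

Lemma cdiff_comp_curve_estimate (h : C2 -> C) (gamma : R -> C2) (t : R) (v : C2) (a1 a2 : C) :
  is_cdiff h (gamma t) a1 a2 -> is_derive_C2 gamma t v -> forall eps : posreal,
  locally t (fun y =>
    Cmod (h (gamma y) - h (gamma t) - RtoC (y - t) * clin a1 a2 v)%C <= eps * Rabs (y - t)).
Proof.
  intros Hh Hg eps.
  set (M := Cmod a1 + Cmod a2). set (V := c2norm v).
  assert (HM : 0 <= M) by (pose proof (Cmod_ge_0 a1); pose proof (Cmod_ge_0 a2); unfold M; lra).
  assert (HV : 0 <= V) by apply c2norm_ge_0.
  pose proof (cond_pos eps) as Heps.
  set (e1 := eps / (2 * (V + 1))).
  assert (He1 : 0 < e1) by (apply Rdiv_lt_0_compat; lra).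
  assert (He1V : e1 * (V + 1) = eps / 2) by (unfold e1; field; lra).
  set (e2 := Rmin 1 (eps / (2 * (M + 1)))).
  assert (He2 : 0 < e2) by (apply Rmin_glb_lt; [lra | apply Rdiv_lt_0_compat; lra]).
  assert (He2M : e2 * (2 * (M + 1)) <= eps) by (apply Rle_div_r; [lra | apply Rmin_r]).
  assert (He21 : e2 <= 1) by apply Rmin_l.
  destruct (Hh e1 He1) as [dh [Hdh Hw]].
  assert (Hdy : 0 < dh / (V + 1)) by (apply Rdiv_lt_0_compat; lra).
  generalize (filter_and _ _ (is_derive_C2_estimate _ _ _ Hg (mkposreal _ He2))
                             (locally_ball t (mkposreal _ Hdy))).
  apply filter_imp. intros y [Hr Hy]. simpl in Hr.
  change (Rabs (y - t) < dh / (V + 1)) in Hy.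
  set (s := y - t) in *. set (w := c2sub (gamma y) (gamma t)) in *.
  set (r := c2sub w (c2scal s v)) in *.
  pose proof (Rabs_pos s) as Hs0.
  assert (Hwn : c2norm w <= (V + e2) * Rabs s) by exact (c2norm_sub_le _ _ _ _ _ Hr).
  assert (Hwd : c2norm w < dh).
  { apply Rlt_div_r in Hy; [nra | lra]. }
  specialize (Hw w Hwd). unfold w in Hw at 1. rewrite c2add_sub in Hw.
  replace (h (gamma y) - h (gamma t) - RtoC s * clin a1 a2 v)%C
    with ((h (gamma y) - h (gamma t) - clin a1 a2 w) + clin a1 a2 r)%C
    by (unfold r; rewrite clin_sub, clin_scal; ring).
  eapply Rle_trans; [apply Cmod_triangle|].
  pose proof (Cmod_clin_le a1 a2 r) as Hr'. fold M in Hr'.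
  assert (HwV : c2norm w <= (V + 1) * Rabs s) by nra.
  assert (HE : e1 * c2norm w <= eps / 2 * Rabs s) by nra.
  assert (HMe2 : M * e2 <= eps / 2) by nra.
  assert (HD : M * c2norm r <= eps / 2 * Rabs s) by nra.
  lra.
Qed.

Theorem lemma2p3
  (Omega : C2 -> Prop) (h : C2 -> C) (phi : R * R -> C2)
  (HOmega : c2domain Omega)
  (Hh : holomorphic_on Omega h)
  (Hdrho : forall z, Omega z -> Cmod (h z) ^ 2 - 1 = 0 ->
     exists L, is_rdiff (fun w => Cmod (h w) ^ 2 - 1) z L /\ exists v, L v <> 0)
  (HK : totally_real_disc_param phi)
  (HKM : forall p, cdisc p -> Omega (phi p) /\ Cmod (h (phi p)) ^ 2 - 1 = 0) :
  forall (gamma gamma' : R -> C2) (a b : R),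
    (forall t, a < t < b ->
       (exists p, cdisc p /\ phi p = gamma t) /\
       is_derive_C2 gamma t (gamma' t) /\
       TK phi (gamma t) (gamma' t) /\
       TCM (fun w => Cmod (h w) ^ 2 - 1) (gamma t) (gamma' t)) ->
    forall s t, a < s < b -> a < t < b -> h (gamma s) = h (gamma t).
Proof.
  intros gamma gamma' a b Hleaf.
  assert (Hflat : forall x, a < x < b ->
    is_derive (fun y => Re (h (gamma y))) x 0 /\ is_derive (fun y => Im (h (gamma y))) x 0).
  { intros x Hx. destruct (Hleaf x Hx) as [[p [Hp Hpx]] [Hg [_ Htan]]].
    destruct (HKM p Hp) as [HO Hunit]. rewrite Hpx in HO, Hunit.
    destruct (Hh _ HO) as [a1 [a2 Hdiff]].
    pose proof (clin_TCM_eq0 _ _ _ _ _ Hdiff Hunit Htan) as Hker.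
    pose proof (is_derive_Re_Im _ _ _ (cdiff_comp_curve_estimate _ _ _ _ _ _ Hdiff Hg)) as Hd.
    rewrite Hker in Hd. exact Hd. }
  intros s t Hs Ht.
  apply injective_projections;
    [apply (is_derive_zero_const (fun y => Re (h (gamma y))) a b)
    |apply (is_derive_zero_const (fun y => Im (h (gamma y))) a b)];
    try assumption; intros x Hx; apply Hflat, Hx.
Qed.
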